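(* There is $N_0$ such that for all $N \geq N_0$, \[ \psi(N,6,3) \geq 1.2228. \]
   Context: $[N] = \{1,2,\dots,N\}$. For positive integers $K$ and $h \geq 3$, let $\mathcal{F}_{K,h}$ be the set of all functions $F(x) = \sum_{j=1}^K b_j \cos(jx)$ with real coefficients satisfying $\sum_{j=1}^K |b_j| = \frac{1}{\cos(\pi/h)}$. For nonempty $A \subseteq [N]$ and $F \in \mathcal{F}_{K,h}$ let $w_F(A) = \sum_{a \in A} F\!\left( \left(a - \frac{N+1}{2}\right) \frac{2\pi}{hN} \right)$, and let \[ \psi(N,K,h) = \min_{\emptyset \neq A \subseteq [N]} \sup \left\{ \frac{w_F(A)}{|A|} : F \in \mathcal{F}_{K,h} \right\}. \] *)

From Stdlib Require Import Reals List.
Import ListNotations.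
Open Scope R_scope.

Definition sum1 (K : nat) (f : nat -> R) : R :=
  fold_right Rplus 0 (map f (seq 1 K)).

Definition Fcos (K : nat) (b : nat -> R) (x : R) : R :=
  sum1 K (fun j => b j * cos (INR j * x)).

Definition in_family (K h : nat) (b : nat -> R) : Prop :=
  sum1 K (fun j => Rabs (b j)) = 1 / cos (PI / INR h).

Definition valid_subset (N : nat) (A : list nat) : Prop :=
  A <> [] /\ NoDup A /\ (forall a, In a A -> (1 <= a <= N)%nat).

Definition wF (N K h : nat) (b : nat -> R) (A : list nat) : R :=
  fold_right Rplus 0
    (map (fun a => Fcos K b ((INR a - (INR N + 1) / 2) * (2 * PI / (INR h * INR N)))) A).

Definition ratio_set (N K h : nat) (A : list nat) : R -> Prop :=
  fun r => exists b, in_family K h b /\ r = wF N K h b A / INR (length A).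

(* psi(N,K,h) >= c, i.e. min over nonempty A of sup(ratio_set) >= c:
   for every nonempty A ⊆ [N], the supremum of ratio_set exists and is >= c. *)
Definition psi_ge (N K h : nat) (c : R) : Prop :=
  forall A, valid_subset N A ->
    exists s, is_lub (ratio_set N K h A) s /\ c <= s.

(* With P(t) = 116/75 t - 37/100 T_3(t) + 1/12 T_6(t), the function F(x) = P(cos x) lies in
   F_{6,3}, because (116/75 + 37/100 + 1/12) cos(pi/3) = 1.  Every sample point
   (a - (N+1)/2) 2pi/(3N) with 1 <= a <= N has absolute value at most pi/3, so its cosine
   lies in [1/2, 1], where P >= 1.2228.  Hence w_F(A)/|A| >= 1.2228 for every A, while the
   whole ratio set is bounded by 1/cos(pi/3), so its supremum exists and is >= 1.2228. *)
From Stdlib Require Import Reals List Lra Psatz Lia.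
Open Scope R_scope.

Lemma fold_Rplus_abs_le (f g : nat -> R) (l : list nat) :
  (forall j, Rabs (f j) <= g j) ->
  Rabs (fold_right Rplus 0 (map f l)) <= fold_right Rplus 0 (map g l).
Proof.
  intros Hfg; induction l as [|a l IH]; simpl.
  - rewrite Rabs_R0; lra.
  - eapply Rle_trans; [apply Rabs_triang|]. specialize (Hfg a). lra.
Qed.

Lemma fold_Rplus_le_mul_length (f : nat -> R) (M : R) (l : list nat) :
  (forall a, In a l -> f a <= M) -> fold_right Rplus 0 (map f l) <= M * INR (length l).
Proof.
  induction l as [|a l IH]; intros Hf; cbn [map fold_right length].
  - simpl; lra.
  - rewrite S_INR.
    assert (f a <= M) by (apply Hf; left; reflexivity).
    assert (fold_right Rplus 0 (map f l) <= M * INR (length l))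
      by (apply IH; intros; apply Hf; right; assumption).
    lra.
Qed.

Lemma fold_Rplus_ge_mul_length (f : nat -> R) (M : R) (l : list nat) :
  (forall a, In a l -> M <= f a) -> M * INR (length l) <= fold_right Rplus 0 (map f l).
Proof.
  induction l as [|a l IH]; intros Hf; cbn [map fold_right length].
  - simpl; lra.
  - rewrite S_INR.
    assert (M <= f a) by (apply Hf; left; reflexivity).
    assert (M * INR (length l) <= fold_right Rplus 0 (map f l))
      by (apply IH; intros; apply Hf; right; assumption).
    lra.
Qed.

Lemma Fcos_le_family_bound (K h : nat) (b : nat -> R) (x : R) :
  in_family K h b -> Fcos K b x <= 1 / cos (PI / INR h).
Proof.
  unfold in_family, Fcos, sum1; intros <-.
  eapply Rle_trans; [apply Rle_abs|]. apply fold_Rplus_abs_le.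
  intros j. rewrite Rabs_mult.
  assert (Rabs (cos (INR j * x)) <= 1) by (apply Rabs_le, COS_bound).
  pose proof (Rabs_pos (b j)). pose proof (Rabs_pos (cos (INR j * x))). nra.
Qed.

Lemma sample_point_abs_le (N h a : nat) : (0 < h)%nat -> (1 <= a <= N)%nat ->
  Rabs ((INR a - (INR N + 1) / 2) * (2 * PI / (INR h * INR N))) <= PI / INR h.
Proof.
  intros Hh [Ha HN].
  apply lt_0_INR in Hh. apply le_INR in Ha. apply le_INR in HN. simpl in Ha.
  pose proof PI_RGT_0.
  set (k := 2 * PI / (INR h * INR N)).
  assert (Hkn : k * INR N = 2 * PI / INR h) by (unfold k; field; lra).
  assert (0 < k) by (apply Rdiv_lt_0_compat; nra).
  assert (Hkh : 2 * PI / INR h = 2 * (PI / INR h)) by (field; lra).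
  apply Rabs_le; split; nra.
Qed.

(* The bound 1/cos(pi/h) on the whole family is what makes the supremum exist. *)
Lemma psi_ge_of_uniform_witness (N K h : nat) (b : nat -> R) (c : R) :
  (0 < h)%nat -> in_family K h b ->
  (forall x, Rabs x <= PI / INR h -> c <= Fcos K b x) ->
  psi_ge N K h c.
Proof.
  intros Hh Hb Hc A [Hne [_ HA]].
  assert (Hlen : 0 < INR (length A)).
  { destruct A; [congruence|]. apply lt_0_INR. simpl; lia. }
  assert (Hmem : ratio_set N K h A (wF N K h b A / INR (length A)))
    by (exists b; split; [exact Hb | reflexivity]).
  assert (Hbound : bound (ratio_set N K h A)).
  { exists (1 / cos (PI / INR h)). intros r [b' [Hb' ->]].
    apply Rmult_le_reg_r with (INR (length A)); [lra|].
    unfold Rdiv at 1; rewrite Rmult_assoc, Rinv_l, Rmult_1_r by lra.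
    apply fold_Rplus_le_mul_length; intros. apply Fcos_le_family_bound, Hb'. }
  destruct (completeness _ Hbound (ex_intro _ _ Hmem)) as [s Hs].
  exists s; split; [exact Hs|].
  apply Rle_trans with (wF N K h b A / INR (length A)); [|apply Hs, Hmem].
  apply Rmult_le_reg_r with (INR (length A)); [lra|].
  unfold Rdiv; rewrite Rmult_assoc, Rinv_l, Rmult_1_r by lra.
  apply fold_Rplus_ge_mul_length; intros a Ha.
  apply Hc, sample_point_abs_le; auto.
Qed.

Lemma cos_3x (x : R) : cos (3 * x) = 4 * cos x ^ 3 - 3 * cos x.
Proof.
  replace (3 * x) with (2 * x + x) by ring.
  rewrite cos_plus, cos_2a_cos, sin_2a.
  pose proof (sin2_cos2 x) as Hpyth. unfold Rsqr in Hpyth.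
  replace (2 * sin x * cos x * sin x) with (2 * cos x * (sin x * sin x)) by ring.
  replace (sin x * sin x) with (1 - cos x * cos x) by lra. ring.
Qed.

Lemma cos_6x (x : R) : cos (6 * x) = 32 * cos x ^ 6 - 48 * cos x ^ 4 + 18 * cos x ^ 2 - 1.
Proof. replace (6 * x) with (2 * (3 * x)) by ring. rewrite cos_2a_cos, cos_3x. ring. Qed.

Lemma cos_ge_half (x : R) : Rabs x <= PI / 3 -> 1 / 2 <= cos x.
Proof.
  intros Hx. rewrite <- cos_PI3.
  assert (Habs : cos x = cos (Rabs x)).
  { unfold Rabs; destruct (Rcase_abs x); [rewrite cos_neg|]; reflexivity. }
  rewrite Habs. pose proof PI_RGT_0. pose proof (Rabs_pos x).
  destruct (Req_dec (Rabs x) (PI / 3)) as [-> | Hne]; [lra|].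
  left. apply cos_decreasing_1; lra.
Qed.

Definition witness_poly (t : R) : R :=
  116/75 * t - 37/100 * (4 * t ^ 3 - 3 * t) + 1/12 * (32 * t ^ 6 - 48 * t ^ 4 + 18 * t ^ 2 - 1).

(* On [lo, hi], a polynomial of degree 6 minus the bound is a nonnegative combination of
   the Bernstein-type products (t - lo)^k (hi - t)^(6-k); lra finds the coefficients. *)
Ltac bernstein_lower_bound lo hi :=
  match goal with
  | H : lo <= ?t <= hi |- _ =>
      destruct H;
      assert (0 <= (t - lo) ^ 0 * (hi - t) ^ 6) by (apply Rmult_le_pos; apply pow_le; lra);
      assert (0 <= (t - lo) ^ 1 * (hi - t) ^ 5) by (apply Rmult_le_pos; apply pow_le; lra);
      assert (0 <= (t - lo) ^ 2 * (hi - t) ^ 4) by (apply Rmult_le_pos; apply pow_le; lra);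
      assert (0 <= (t - lo) ^ 3 * (hi - t) ^ 3) by (apply Rmult_le_pos; apply pow_le; lra);
      assert (0 <= (t - lo) ^ 4 * (hi - t) ^ 2) by (apply Rmult_le_pos; apply pow_le; lra);
      assert (0 <= (t - lo) ^ 5 * (hi - t) ^ 1) by (apply Rmult_le_pos; apply pow_le; lra);
      assert (0 <= (t - lo) ^ 6 * (hi - t) ^ 0) by (apply Rmult_le_pos; apply pow_le; lra);
      unfold witness_poly; lra
  end.

Lemma witness_poly_ge (t : R) : 1/2 <= t <= 1 -> 12228/10000 <= witness_poly t.
Proof.
  intros [Hlo Hhi].
  destruct (Rle_dec t (3/4)).
  { assert (1/2 <= t <= 3/4) by lra. bernstein_lower_bound (1/2) (3/4). }
  destruct (Rle_dec t (7/8)).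
  { assert (3/4 <= t <= 7/8) by lra. bernstein_lower_bound (3/4) (7/8). }
  destruct (Rle_dec t (15/16)).
  { assert (7/8 <= t <= 15/16) by lra. bernstein_lower_bound (7/8) (15/16). }
  assert (15/16 <= t <= 1) by lra. bernstein_lower_bound (15/16) 1.
Qed.

Definition witness_coeffs (j : nat) : R :=
  match j with 1%nat => 116/75 | 3%nat => - (37/100) | 6%nat => 1/12 | _ => 0 end.

Lemma Fcos_witness (x : R) : Fcos 6 witness_coeffs x = witness_poly (cos x).
Proof.
  unfold Fcos, sum1, witness_poly. cbn [seq map fold_right witness_coeffs].
  replace (INR 1) with 1 by reflexivity.
  replace (INR 3) with 3 by (simpl; lra).
  replace (INR 6) with 6 by (simpl; lra).
  rewrite cos_3x, cos_6x, Rmult_1_l. ring.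
Qed.

Lemma in_family_witness : in_family 6 3 witness_coeffs.
Proof.
  unfold in_family, sum1. cbn [seq map fold_right witness_coeffs].
  replace (INR 3) with 3 by (simpl; lra). rewrite cos_PI3, Rabs_R0.
  rewrite (Rabs_right (116/75)), (Rabs_left (- (37/100))), (Rabs_right (1/12)) by lra.
  field.
Qed.

Theorem theorem3p2 :
  exists N0 : nat, forall N : nat, (N0 <= N)%nat -> psi_ge N 6 3 (12228 / 10000).
Proof.
  exists 0%nat. intros N _.
  apply psi_ge_of_uniform_witness with witness_coeffs; [lia | exact in_family_witness|].
  intros x Hx. rewrite Fcos_witness. apply witness_poly_ge.
  split; [|apply COS_bound].
  apply cos_ge_half. replace (INR 3) with 3 in Hx by (simpl; lra). exact Hx.
Qed.
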